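(* Fix a general instance satisfying the unique-default-action assumption, with relevant-action tie-breaking, and a true bias $\alpha^\star\in(0,1]$. At least one of the following holds. 1. There exist constants $c>0$ and $\varepsilon>0$ such that, for every interval $J\subseteq(0,1]$ with $\alpha^\star\in J$ and $|J|\le\varepsilon$, every interval-safe vertex-supported optimizer $\tau$ on $J$ satisfies $P_{\rm info}^J(\tau)\ge c$. 2. There exists a true-bias optimal scheme $\tau^\star$ with $P_{\rm info}^{\alpha^\star}(\tau^\star)=0$.
   Context: General model: finite $\Omega$ and $A$, full-support prior $\mu_0$, utilities $u_S,u_R:A\times\Omega\to\mathbb R$, and $\Delta u_{a,a'}(\omega)=u_R(a,\omega)-u_R(a',\omega)$. A receiver with bias $\alpha\in(0,1]$ best-responds to $(1-\alpha)\mu_0+\alpha\nu$. Action regions. For $\alpha\in(0,1]$ set $b_{a,a'}(\alpha)=\frac{\alpha-1}{\alpha}\Delta u_{a,a'}^\top\mu_0$ and $R_a^\alpha=\{\nu\in\Delta(\Omega):\Delta u_{a,a'}^\top\nu\ge b_{a,a'}(\alpha)\ \forall a'\ne a\}$. For an interval $J=[\underline\alpha,\overline\alpha]\subseteq(0,1]$ set $b_{a,a'}(J)=\max\{b_{a,a'}(\underline\alpha),b_{a,a'}(\overline\alpha)\}$, $R_a^J=\{\nu\in\Delta(\Omega):\Delta u_{a,a'}^\top\nu\ge b_{a,a'}(J)\ \forall a'\ne a\}$, and $\mathrm{int}_{IC}(R_a^J)$ the same set with strict inequalities. Relevant actions: $A_{\rm rel}$ is the set of actions that are the unique maximizer of $\sum_\omega((1-\alpha^\star)\mu_0(\omega)+\alpha^\star\nu(\omega))u_R(\cdot,\omega)$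 for some $\nu\in\Delta(\Omega)$. Tie-breaking: the receiver never picks an action outside $A_{\rm rel}$ and breaks ties among relevant actions in the sender's favor. Unique default action: $\arg\max_a\sum_\omega\mu_0(\omega)u_R(a,\omega)=\{a_0\}$. Schemes. A scheme is a finite list of triples $(p_i,\nu_i,a_i)$ with $p_i\ge0$, $\sum p_i=1$, $\sum p_i\nu_i=\mu_0$, and value $\sum_ip_i\sum_\omega\nu_i(\omega)u_S(a_i,\omega)$. - A true-bias optimal scheme has $a_i\in A_{\rm rel}$, $\nu_i\in R_{a_i}^{\alpha^\star}$, and maximal value among such schemes. - An interval-safe vertex-supported optimizer on $J$ is a scheme with $\mathrm{int}_{IC}(R_{a_i}^J)\ne\emptyset$ and $\nu_i$ a vertex of the polytope $R_{a_i}^J$, whose value equals the supremum of values over all schemes with $\nu_i\in R_{a_i}^J$ and $\mathrm{int}_{IC}(R_{a_i}^J)\neq\emptyset$. Informative posteriors. A pair $(a,a')$ is movable if $\Delta u_{a,a'}^\top\mu_0\ne0$. - $P_{\rm info}^J(\tau)$ is the total mass $p_i$ of atoms such that $\Delta u_{a_i,a'}^\top\nu_i=b_{a_i,a'}(J)$ for some movable pair $(a_i,a')$. - $P_{\rm info}^{\alpha^\star}(\tau)$ is defined the same way with $b_{a_i,a'}(\alpha^\star)$ in place of $b_{a_i,a'}(J)$. *)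

From mathcomp Require Import all_boot all_order all_algebra.
From mathcomp Require Import reals.
From Stdlib Require Lists.List.
Set Implicit Arguments. Unset Strict Implicit. Unset Printing Implicit Defensive.
Import Order.TTheory GRing.Theory Num.Theory.
Local Open Scope ring_scope.

Record atom (R : realType) (Omega A : finType) := Atom {
  atom_p : R ; atom_nu : Omega -> R ; atom_a : A }.
Definition scheme (R : realType) (Omega A : finType) := seq (atom R Omega A).

Section BP.
Context (R : realType) (Omega A : finType).

Definition belief (nu : Omega -> R) : Prop :=
  (forall w, 0 <= nu w) /\ \sum_(w : Omega) nu w = 1.

Definition full_support_prior (mu0 : Omega -> R) : Prop :=
  (forall w, 0 < mu0 w) /\ \sum_(w : Omega) mu0 w = 1.

Context (mu0 : Omega -> R) (uS uR : A -> Omega -> R).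

Definition du (a a' : A) (nu : Omega -> R) : R :=
  \sum_(w : Omega) (uR a w - uR a' w) * nu w.

Definition b_alpha (a a' : A) (alpha : R) : R :=
  (alpha - 1) / alpha * du a a' mu0.

Definition b_J (a a' : A) (lo hi : R) : R :=
  Num.max (b_alpha a a' lo) (b_alpha a a' hi).

Definition region_alpha (a : A) (alpha : R) (nu : Omega -> R) : Prop :=
  belief nu /\ forall a', a' != a -> b_alpha a a' alpha <= du a a' nu.

Definition region_J (a : A) (lo hi : R) (nu : Omega -> R) : Prop :=
  belief nu /\ forall a', a' != a -> b_J a a' lo hi <= du a a' nu.

Definition intIC_J (a : A) (lo hi : R) (nu : Omega -> R) : Prop :=
  belief nu /\ forall a', a' != a -> b_J a a' lo hi < du a a' nu.

Definition is_vertex (P : (Omega -> R) -> Prop) (nu : Omega -> R) : Prop :=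
  P nu /\ forall (x y : Omega -> R) (t : R), P x -> P y -> 0 < t < 1 ->
    (forall w, nu w = t * x w + (1 - t) * y w) -> forall w, x w = y w.

Definition EuR (a : A) (q : Omega -> R) : R := \sum_(w : Omega) q w * uR a w.

Definition relevant (alpha : R) (a : A) : Prop :=
  exists nu : Omega -> R, belief nu /\
    forall a', a' != a ->
      EuR a' (fun w => (1 - alpha) * mu0 w + alpha * nu w)
      < EuR a (fun w => (1 - alpha) * mu0 w + alpha * nu w).

Definition unique_default : Prop :=
  exists a0 : A, forall a, a != a0 -> EuR a mu0 < EuR a0 mu0.

Definition is_scheme (tau : scheme R Omega A) : Prop :=
  (forall t, Stdlib.Lists.List.In t tau -> 0 <= atom_p t) /\
  \sum_(t <- tau) atom_p t = 1 /\
  (forall w, \sum_(t <- tau) atom_p t * atom_nu t w = mu0 w).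

Definition value (tau : scheme R Omega A) : R :=
  \sum_(t <- tau) atom_p t * \sum_(w : Omega) atom_nu t w * uS (atom_a t) w.

Definition true_bias_feasible (alpha : R) (tau : scheme R Omega A) : Prop :=
  is_scheme tau /\ forall t, Stdlib.Lists.List.In t tau ->
    relevant alpha (atom_a t) /\ region_alpha (atom_a t) alpha (atom_nu t).

Definition true_bias_optimal (alpha : R) (tau : scheme R Omega A) : Prop :=
  true_bias_feasible alpha tau /\
  forall sigma, true_bias_feasible alpha sigma -> value sigma <= value tau.

Definition interval_safe_feasible (lo hi : R) (tau : scheme R Omega A) : Prop :=
  is_scheme tau /\ forall t, Stdlib.Lists.List.In t tau ->
    region_J (atom_a t) lo hi (atom_nu t) /\
    exists nu, intIC_J (atom_a t) lo hi nu.

(* interval-safe vertex-supported optimizer on J = [lo, hi]; its value equals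
   the supremum of the feasible values, i.e. (since it is itself feasible) it
   is an upper bound of them. *)
Definition interval_safe_vertex_optimizer (lo hi : R) (tau : scheme R Omega A)
  : Prop :=
  interval_safe_feasible lo hi tau /\
  (forall t, Stdlib.Lists.List.In t tau ->
     is_vertex (region_J (atom_a t) lo hi) (atom_nu t)) /\
  forall sigma, interval_safe_feasible lo hi sigma -> value sigma <= value tau.

Definition movable (a a' : A) : bool := du a a' mu0 != 0.

Definition P_info_J (lo hi : R) (tau : scheme R Omega A) : R :=
  \sum_(t <- tau | [exists a', movable (atom_a t) a' &&
                     (du (atom_a t) a' (atom_nu t) == b_J (atom_a t) a' lo hi)])
    atom_p t.

Definition P_info_alpha (alpha : R) (tau : scheme R Omega A) : R :=
  \sum_(t <- tau | [exists a', movable (atom_a t) a' &&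
                     (du (atom_a t) a' (atom_nu t) == b_alpha (atom_a t) a' alpha)])
    atom_p t.

End BP.

(* Call an atom of a vertex-supported optimizer on J informative when a movable IC
   constraint binds at it.  A non-informative atom is a vertex of R_a^J pinned down by
   finite data, its action and active constraints, all of which are independent of the
   bias; so it is one of finitely many candidate posteriors, each strictly IC at alpha*.
   The non-informative part of an optimizer is thus a weight vector on these candidates
   lying in a compact box.  Let g be the minimum over the box of the distance of the
   weighted candidates from the prior plus the distance of their value from the optimal
   true-bias value M.  If g = 0, a minimizer is an optimal true-bias scheme at which no
   movable constraint binds.  If g > 0: interval-safe schemes come within g/2 of M once J
   is short (push every posterior slightly towards a strictly IC point and compensate
   with one atom near the prior, where the default action is strictly optimal), so the
   informative mass P of an optimizer satisfies g <= (1 + B) P + g/2, B bounding |uS|. *)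

From Pilot Require Import Defs.
From mathcomp Require Import all_boot all_order all_algebra.
From mathcomp Require Import reals.
From mathcomp Require Import ring lra.
From mathcomp Require Import boolp classical_sets topology normedtype matrix_normedtype derive.
Set Implicit Arguments. Unset Strict Implicit. Unset Printing Implicit Defensive.
Import Order.TTheory GRing.Theory Num.Theory.
Import numFieldTopology.Exports numFieldNormedType.Exports.
Local Open Scope ring_scope.

Section NearZero.
Context {R : realFieldType}.
Local Open Scope classical_set_scope.

Lemma near0_witness {P : R -> Prop} :
  (\forall s \near 0^'+, P s) -> exists2 s, 0 < s & P s.
Proof.
move=> HP; have : \forall s \near 0^'+, 0 < s /\ P s.
  by near=> s; split; [near: s; exact: nbhs_right_gt | near: s].
by move=> /filter_ex [s [s0 Ps]]; exists s.
Unshelve. all: by end_near.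
Qed.

Lemma near0_addr_mul_gt0 (x c : R) : 0 < x ->
  \forall s \near 0^'+, forall k, `|k| <= s -> 0 < x + k * c.
Proof.
move=> x0; have c1 : 0 < `|c| + 1 by rewrite ltr_wpDl.
near=> s => k ks.
have sx : s < x / (`|c| + 1) by near: s; apply: nbhs_right_lt; rewrite divr_gt0.
have : `|k * c| < x.
  rewrite normrM; apply: (le_lt_trans (y := x / (`|c| + 1) * `|c|)).
    by rewrite ler_wpM2r // (le_trans ks) // ltW.
  by rewrite mulrAC ltr_pdivrMr // ltr_pM2l // ltrDl.
rewrite ltr_norml => /andP[]; lra.
Unshelve. all: by end_near.
Qed.

Lemma near0_addr_mul_ge0 (x c : R) : 0 <= x -> (x = 0 -> c = 0) ->
  \forall s \near 0^'+, forall k, `|k| <= s -> 0 <= x + k * c.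
Proof.
move=> x0 xc; have [x_eq0|x_neq0] := eqVneq x 0.
  by apply: filterS (nbhs_right_gt 0) => s _ k _; rewrite x_eq0 xc // mulr0 addr0.
have xpos : 0 < x by rewrite lt_def x_neq0.
by apply: filterS (near0_addr_mul_gt0 c xpos) => s Hs k /Hs /ltW.
Qed.

End NearZero.

Lemma near_all_In {U T : Type} (F : set_system U) (r : seq T) (P : T -> U -> Prop) :
  Filter F -> (forall t, List.In t r -> \forall x \near F, P t x) ->
  \forall x \near F, forall t, List.In t r -> P t x.
Proof.
move=> FF; elim: r => [|t r IH] Hr; first by apply: nearW => x u [].
have Ht := Hr t (or_introl erefl).
have Hrest := IH (fun u hu => Hr u (or_intror hu)).
by apply: filterS (filterI Ht Hrest) => x [Hx Hxr] u [<-|/Hxr].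
Qed.

Section SeqSums.
Context {R : numDomainType} {T : Type}.
Implicit Types (r : seq T) (P : pred T) (F G : T -> R).

Lemma ler_sum_In r F G :
  (forall t, List.In t r -> F t <= G t) -> \sum_(t <- r) F t <= \sum_(t <- r) G t.
Proof.
elim: r => [|x r IH] H; first by rewrite !big_nil.
rewrite !big_cons lerD ?H ?IH //; first by left.
by move=> t ht; apply: H; right.
Qed.

Lemma eq_sum_In r F G :
  (forall t, List.In t r -> F t = G t) -> \sum_(t <- r) F t = \sum_(t <- r) G t.
Proof.
move=> H; apply/eqP; rewrite eq_le !ler_sum_In // => t /H ->//.
Qed.

Lemma sumr_ge0_In r P F :
  (forall t, List.In t r -> 0 <= F t) -> 0 <= \sum_(t <- r | P t) F t.
Proof.
elim: r => [|x r IH] H; first by rewrite big_nil.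
have {}IH := IH (fun t ht => H t (or_intror ht)).
by rewrite big_cons; case: ifP => _ //; rewrite addr_ge0 // H //; left.
Qed.

Lemma ler_sum_filter_In r P F :
  (forall t, List.In t r -> 0 <= F t) -> \sum_(t <- r | P t) F t <= \sum_(t <- r) F t.
Proof. by move=> H; rewrite big_mkcond; apply: ler_sum_In => t /H; case: (P t). Qed.

Lemma big_pred0_In r P F :
  (forall t, List.In t r -> ~~ P t) -> \sum_(t <- r | P t) F t = 0.
Proof.
elim: r => [|x r IH] H; first by rewrite big_nil.
have {}IH := IH (fun t ht => H t (or_intror ht)).
by rewrite big_cons (negbTE (H x _)) //; left.
Qed.

Lemma sum_fibers (I : finType) r P (g : T -> I) F (X : I -> R) :
  \sum_i (\sum_(t <- r | P t && (g t == i)) F t) * X i = \sum_(t <- r | P t) F t * X (g t).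
Proof.
under eq_bigr do rewrite mulr_suml.
rewrite (exchange_big_dep P) => [|i t _ /andP[]//] /=.
by apply: eq_bigr => t Pt; rewrite (big_pred1 (g t)) // => i; rewrite Pt eq_sym.
Qed.

End SeqSums.

Lemma In_map_filter (T U : Type) (f : T -> U) (P : pred T) (s : seq T) u :
  List.In u [seq f i | i <- s & P i] -> exists2 i, P i & u = f i.
Proof.
elim: s => [|x s IH] //=; case: ifP => Px /=; last exact: IH.
by case=> [<-|/IH//]; exists x.
Qed.

Lemma normr_le_sum2 {R : numDomainType} (I J : finType) (F : I -> J -> R) i j :
  `|F i j| <= \sum_i' \sum_j' `|F i' j'|.
Proof.
have Fi : `|F i j| <= \sum_j' `|F i j'| by rewrite (bigD1 j) //= lerDl sumr_ge0.
by apply: le_trans Fi _; rewrite (bigD1 i) //= lerDl sumr_ge0 // => k _; rewrite sumr_ge0.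
Qed.

Section RealContinuity.
Context {R : realType}.

Lemma continuous_sumr (T : topologicalType) (I : finType) (F : I -> T -> R) :
  (forall i, continuous (F i)) -> continuous (fun x => \sum_i F i x).
Proof.
by move=> Fc; apply: (continuous_big (op := +%R)) => [|i _]; [exact: add_continuous | exact: Fc].
Qed.

Lemma continuous_normr (T : topologicalType) (F : T -> R) :
  continuous F -> continuous (fun x => `|F x|).
Proof. by move=> Fc x; apply: continuous_comp; [exact: Fc | exact: (@norm_continuous R R^o)]. Qed.

Lemma continuous_addr (T : topologicalType) (F G : T -> R) :
  continuous F -> continuous G -> continuous (fun x => F x + G x).
Proof. by move=> Fc Gc x; apply: (@continuousD R R^o T F G); [exact: Fc | exact: Gc]. Qed.

Lemma continuous_subr (T : topologicalType) (F G : T -> R) :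
  continuous F -> continuous G -> continuous (fun x => F x - G x).
Proof.
move=> Fc Gc x; apply: (@continuousD R R^o T F (fun x => - G x)); first exact: Fc.
by apply: (@continuousN R R^o T G); exact: Gc.
Qed.

End RealContinuity.

Section UnitBox.
Context {R : realType} (n : nat).
Local Open Scope classical_set_scope.

Definition unit_box (V : 'I_n -> Prop) : set 'rV[R]_n :=
  [set m | forall j, (V j -> 0 <= m ord0 j <= 1) /\ (~ V j -> m ord0 j = 0)].

Lemma continuous_min_unit_box V (h : 'rV[R]_n -> R) : continuous h ->
  exists2 m0, unit_box V m0 & forall m, unit_box V m -> h m0 <= h m.
Proof.
move=> hc; pose A j : set R := if pselect (V j) then `[0, 1] else [set 0].
have boxA m : unit_box V m <-> forall j, A j (m ord0 j).
  split=> Hm j; have := Hm j; rewrite /A; case: pselect => Vj /=.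
  - by rewrite in_itv /= => -[/(_ Vj)].
  - by case=> _ /(_ Vj).
  - by rewrite in_itv /= => mj; split.
  - by move=> mj; split.
have cK : compact [set m : 'rV[R]_n | forall j, A j (m ord0 j)].
  apply: rV_compact => j; rewrite /A; case: pselect => Vj.
    exact: segment_compact.
  exact: compact_set1.
have K0 : [set m : 'rV[R]_n | forall j, A j (m ord0 j)] !=set0.
  by exists 0; apply/boxA => j; rewrite mxE; split=> // _; rewrite lexx ler01.
have [m0 /set_mem m0K Hm] := compact_EVT_min K0 cK (continuous_subspaceT hc).
exists m0; first exact/boxA.
by move=> m /boxA mK; apply: Hm; rewrite inE.
Qed.

Lemma weighted_sum_continuous (I : finType) (c : I -> 'I_n) (x : I -> R) :
  continuous (fun m : 'rV[R]_n => \sum_i m ord0 (c i) * x i).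
Proof.
apply: continuous_sumr => i m.
by apply: (@continuousM R 'rV[R]_n); [exact: coord_continuous | exact: cst_continuous].
Qed.

End UnitBox.

Section Persuasion.
Context {R : realType} {Omega A : finType} (mu0 : Omega -> R) (uS uR : A -> Omega -> R).

Local Open Scope classical_set_scope.
Local Notation du := (du uR).
Local Notation b := (b_alpha mu0 uR).
Local Notation bJ := (b_J mu0 uR).
Local Notation movable := (movable mu0 uR).
Local Notation relevant := (relevant mu0 uR).
Local Notation region_alpha := (region_alpha mu0 uR).
Local Notation region_J := (region_J mu0 uR).
Local Notation intIC_J := (intIC_J mu0 uR).

(** * Incentive regions *)

Lemma du_comb a a' (f g : Omega -> R) (x y : R) :
  du a a' (fun w => x * f w + y * g w) = x * du a a' f + y * du a a' g.
Proof. by rewrite /Defs.du !mulr_sumr -big_split /=; apply: eq_bigr => w _; ring. Qed.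

Lemma du_shift a a' (f g : Omega -> R) (s : R) :
  du a a' (fun w => f w + s * g w) = du a a' f + s * du a a' g.
Proof. by rewrite /Defs.du mulr_sumr -big_split /=; apply: eq_bigr => w _; ring. Qed.

Lemma duB a a' (f g : Omega -> R) : du a a' (fun w => f w - g w) = du a a' f - du a a' g.
Proof. by rewrite /Defs.du -sumrB; apply: eq_bigr => w _; ring. Qed.

Lemma sum_comb (f g : Omega -> R) (x y : R) :
  \sum_w (x * f w + y * g w) = x * \sum_w f w + y * \sum_w g w.
Proof. by rewrite !mulr_sumr -big_split. Qed.

Lemma sum_shift (f g : Omega -> R) (s : R) :
  \sum_w (f w + s * g w) = \sum_w f w + s * \sum_w g w.
Proof. by rewrite mulr_sumr -big_split. Qed.

Lemma du_self a nu : du a a nu = 0.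
Proof. by rewrite /Defs.du big1 // => w _; rewrite subrr mul0r. Qed.

Lemma b_alpha_nonmovable a a' (al : R) : ~~ movable a a' -> b a a' al = 0.
Proof. by rewrite /Defs.movable negbK /b_alpha => /eqP ->; rewrite mulr0. Qed.

Lemma b_J_nonmovable a a' (lo hi : R) : ~~ movable a a' -> bJ a a' lo hi = 0.
Proof. by move=> nm; rewrite /b_J !b_alpha_nonmovable // maxxx. Qed.

Lemma b_alphaE a a' (al : R) : al != 0 -> b a a' al = du a a' mu0 - du a a' mu0 / al.
Proof. by move=> al0; rewrite /b_alpha; field. Qed.

Lemma b_alpha_le_b_J a a' (lo al hi : R) :
  0 < lo -> lo <= al -> al <= hi -> b a a' al <= bJ a a' lo hi.
Proof.
move=> lo0 la ah; have al0 := lt_le_trans lo0 la; have hi0 := lt_le_trans al0 ah.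
have Vla : al^-1 <= lo^-1 by rewrite lef_pV2 ?posrE // (lt_le_trans lo0).
have Vah : hi^-1 <= al^-1 by rewrite lef_pV2 ?posrE // (lt_le_trans al0).
rewrite /b_J le_max !b_alphaE ?gt_eqF //; set d := du a a' mu0.
have [d0|d0] := lerP 0 d.
  by apply/orP; right; rewrite lerD2l lerN2; apply: ler_wpM2l.
by apply/orP; left; rewrite lerD2l lerN2; apply: ler_wnM2l => //; apply: ltW.
Qed.

Lemma b_alpha_lipschitz a a' (al x : R) : 0 < al -> al <= 2 * x ->
  b a a' x <= b a a' al + `|x - al| * (2 * `|du a a' mu0| / al ^+ 2).
Proof.
move=> al0 alx; have x0 : 0 < x by lra.
rewrite !b_alphaE ?gt_eqF //; set d := du a a' mu0.
have -> : d - d / x = d - d / al + d * (x - al) / (al * x) by field; rewrite !gt_eqF.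
rewrite lerD2l; apply: le_trans (_ : `|d * (x - al)| / (al * x) <= _).
  by rewrite ler_pM2r ?invr_gt0 ?mulr_gt0 // ler_norm.
have -> : 2 * `|d| / al ^+ 2 = `|d| / (al ^+ 2 / 2) by field; rewrite gt_eqF.
rewrite normrM -mulrA mulrCA; apply: ler_wpM2l => //; apply: ler_wpM2l => //.
by rewrite lef_pV2 ?posrE ?mulr_gt0 ?divr_gt0 ?exprn_gt0 ?invr_gt0 // expr2; nra.
Qed.

Lemma near0_b_J_lt a a' (al y : R) : 0 < al -> b a a' al < y ->
  \forall e \near 0^'+, forall lo hi, lo <= al -> al <= hi -> hi - lo <= e ->
    bJ a a' lo hi < y.
Proof.
move=> al0 by0; pose K := 2 * `|du a a' mu0| / al ^+ 2.
have K0 : 0 <= K by apply: divr_ge0; [apply: mulr_ge0 | rewrite sqr_ge0].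
have slack : 0 < y - b a a' al by rewrite subr_gt0.
near=> e => lo hi la ah he.
have e0 : 0 < e by near: e; exact: nbhs_right_gt.
have e_al : e < al / 2 by near: e; apply: nbhs_right_lt; rewrite divr_gt0.
have eK : forall k, `|k| <= e -> 0 < y - b a a' al + k * - K.
  by near: e; exact: near0_addr_mul_gt0.
have {}eK : 0 < y - b a a' al + e * - K by apply: eK; rewrite gtr0_norm.
have close x : lo <= x <= hi -> b a a' x < y.
  move=> /andP[lx xh]; have x2 : al <= 2 * x by lra.
  have := b_alpha_lipschitz a a' al0 x2; rewrite -/K => b_x.
  have : `|x - al| * K <= e * K by rewrite ler_wpM2r // ler_norml; apply/andP; split; lra.
  lra.
by rewrite /b_J gt_max !close ?lexx ?la ?(le_trans la ah).
Unshelve. all: by end_near.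
Qed.

Lemma EuR_subr a a' q : EuR uR a q - EuR uR a' q = du a a' q.
Proof. by rewrite /EuR -sumrB; apply: eq_bigr => w _; ring. Qed.

Lemma EuR_mix_subr (al : R) a a' nu : al != 0 ->
  EuR uR a (fun w => (1 - al) * mu0 w + al * nu w)
  - EuR uR a' (fun w => (1 - al) * mu0 w + al * nu w) = al * (du a a' nu - b a a' al).
Proof. by move=> al0; rewrite EuR_subr du_comb /b_alpha; field. Qed.

Lemma relevantP (al : R) a : 0 < al ->
  relevant al a <-> exists nu, belief nu /\ forall a', a' != a -> b a a' al < du a a' nu.
Proof.
move=> al0; have E a' nu := @EuR_mix_subr al a a' nu (lt0r_neq0 al0).
split=> -[nu [bnu H]]; exists nu; split=> // a' /H.
  by rewrite -subr_gt0 E pmulr_rgt0 // subr_gt0.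
by rewrite -subr_gt0 -(pmulr_rgt0 _ al0) -E subr_gt0.
Qed.

Lemma region_J_region_alpha (lo al hi : R) a nu : 0 < lo -> lo <= al -> al <= hi ->
  region_J a lo hi nu -> region_alpha a al nu.
Proof.
move=> lo0 la ah [bnu H]; split=> // a' /H; apply: le_trans.
exact: b_alpha_le_b_J.
Qed.

Lemma intIC_J_relevant (lo al hi : R) a nu : 0 < lo -> lo <= al -> al <= hi ->
  intIC_J a lo hi nu -> relevant al a.
Proof.
move=> lo0 la ah [bnu H]; apply/(@relevantP al a (lt_le_trans lo0 la)).
by exists nu; split=> // a' /H; apply: le_lt_trans; apply: b_alpha_le_b_J.
Qed.

Lemma interval_safe_true_bias_feasible (lo al hi : R) tau : 0 < lo -> lo <= al -> al <= hi ->
  interval_safe_feasible mu0 uR lo hi tau -> true_bias_feasible mu0 uR al tau.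
Proof.
move=> lo0 la ah [sch H]; split=> // t /H [reg [nu int]]; split.
  exact: intIC_J_relevant int.
exact: region_J_region_alpha reg.
Qed.

Definition uS_bound : R := \sum_a \sum_w `|uS a w|.

Lemma uS_bound_ge0 : 0 <= uS_bound.
Proof. by apply: sumr_ge0 => a _; apply: sumr_ge0. Qed.

Lemma posterior_value_bound nu a : belief nu -> `|\sum_w nu w * uS a w| <= uS_bound.
Proof.
move=> [nu0 nu1]; apply: le_trans (ler_norm_sum _ _ _) _.
rewrite -[uS_bound]mul1r -nu1 mulr_suml; apply: ler_sum => w _.
by rewrite normrM ger0_norm // ler_wpM2l // normr_le_sum2.
Qed.

Lemma mixture_value_bound (tau : scheme R Omega A) (f : atom R Omega A -> Omega -> R) :
  (forall t, List.In t tau -> 0 <= atom_p t) -> \sum_(t <- tau) atom_p t = 1 ->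
  (forall t, List.In t tau -> belief (f t)) ->
  `|\sum_(t <- tau) atom_p t * \sum_w f t w * uS (atom_a t) w| <= uS_bound.
Proof.
move=> p0 p1 bf; apply: le_trans (ler_norm_sum _ _ _) _.
rewrite -[uS_bound]mul1r -p1 mulr_suml; apply: ler_sum_In => t ht.
have pt0 := p0 t ht; rewrite normrM ger0_norm //.
by rewrite ler_wpM2l // posterior_value_bound //; apply: bf.
Qed.

(** * Vertices of [R_a^J] *)

Lemma is_vertex_dir0 (P : (Omega -> R) -> Prop) nu (d : Omega -> R) (s : R) :
  is_vertex P nu -> 0 < s -> (forall k, `|k| <= s -> P (fun w => nu w + k * d w)) ->
  forall w, d w = 0.
Proof.
move=> [_ Hv] s0 HP w.
have half : ((0 : R) < 2^-1) && (2^-1 < (1 : R)).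
  by apply/andP; split; [rewrite invr_gt0 | rewrite invf_lt1 // ltr1n].
have mid v : nu v = 2^-1 * (nu v + s * d v) + (1 - 2^-1) * (nu v + - s * d v) by field.
have := Hv _ _ _ (HP s _) (HP (- s) _) half mid w.
rewrite normrN gtr0_norm // => /(_ (lexx s) (lexx s)) /addrI sd.
have /eqP : s * d w = 0 by lra.
by rewrite mulf_eq0 gt_eqF //= => /eqP.
Qed.

Lemma near0_region_J_shift a (lo hi : R) nu (d : Omega -> R) :
  region_J a lo hi nu ->
  (forall a', a' != a -> movable a a' -> bJ a a' lo hi < du a a' nu) ->
  \sum_w d w = 0 -> (forall w, nu w = 0 -> d w = 0) ->
  (forall a', a' != a -> ~~ movable a a' -> du a a' nu = 0 -> du a a' d = 0) ->
  \forall s \near 0^'+, forall k, `|k| <= s -> region_J a lo hi (fun w => nu w + k * d w).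
Proof.
move=> [[nu0 nu1] reg] strict d0 dsupp dflat.
have /filter_forall coord := fun w => near0_addr_mul_ge0 (nu0 w) (dsupp w).
have /filter_forall constr : forall a', \forall s \near 0^'+, forall k, `|k| <= s ->
    a' != a -> 0 <= du a a' nu - bJ a a' lo hi + k * du a a' d.
  move=> a'; have [->|ne] := eqVneq a' a; first by apply: filterS (nbhs_right_gt 0) => s _ k _.
  have slack : 0 <= du a a' nu - bJ a a' lo hi by rewrite subr_ge0 reg.
  have flat : du a a' nu - bJ a a' lo hi = 0 -> du a a' d = 0.
    move=> /eqP; rewrite subr_eq0 => /eqP tight; case hm: (movable a a').
      by have := strict a' ne hm; rewrite tight ltxx.
    by apply: dflat; rewrite ?hm // tight b_J_nonmovable ?hm.
  by apply: filterS (near0_addr_mul_ge0 slack flat) => s Hs k /Hs.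
apply: filterS (filterI coord constr) => s [Hc Hk] k ks; split; [split|].
- by move=> w; apply: Hc.
- by rewrite sum_shift nu1 d0 mulr0 addr0.
- by move=> a' ne; rewrite du_shift; have := Hk a' k ks ne; lra.
Qed.

Lemma region_J_vertex_eq a (lo hi : R) nu nu' :
  is_vertex (region_J a lo hi) nu ->
  (forall a', a' != a -> movable a a' -> bJ a a' lo hi < du a a' nu) ->
  \sum_w nu' w = 1 -> (forall w, nu w = 0 -> nu' w = 0) ->
  (forall a', a' != a -> ~~ movable a a' -> du a a' nu = 0 -> du a a' nu' = 0) ->
  nu' = nu.
Proof.
move=> vx strict nu'1 supp flat; have reg := vx.1; have [[_ nu1] _] := reg.
pose d w := nu' w - nu w.
have d_sum : \sum_w d w = 0 by rewrite sumrB nu'1 nu1 subrr.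
have d_supp w : nu w = 0 -> d w = 0 by move=> nw0; rewrite /d nw0 supp // subr0.
have d_flat a' : a' != a -> ~~ movable a a' -> du a a' nu = 0 -> du a a' d = 0.
  by move=> ne nm dnu0; rewrite duB dnu0 flat // subr0.
have [s s0 Hs] := near0_witness (near0_region_J_shift reg strict d_sum d_supp d_flat).
apply: funext => w; have := is_vertex_dir0 vx s0 Hs w.
by move=> /eqP; rewrite subr_eq0 => /eqP.
Qed.

(* A non-informative vertex of [R_a^J] is determined by its action and its active set:
   the zero coordinates and the binding non-movable constraints, which read [du = 0]
   whatever the bias.  A face is such a pair. *)
Definition face := (A * {set Omega + A})%type.

Definition active_set a nu : {set Omega + A} :=
  [set i | match i with
           | inl w => nu w == 0
           | inr a' => [&& a' != a, ~~ movable a a' & du a a' nu == 0]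
           end].

Definition on_face (i : face) nu : Prop :=
  [/\ \sum_w nu w = 1, forall w, inl w \in i.2 -> nu w = 0
    & forall a', inr a' \in i.2 -> du i.1 a' nu = 0].

Definition face_point (i : face) : Omega -> R := xget mu0 (on_face i).

Lemma face_point_vertex a (lo hi : R) nu : is_vertex (region_J a lo hi) nu ->
  (forall a', a' != a -> movable a a' -> bJ a a' lo hi < du a a' nu) ->
  face_point (a, active_set a nu) = nu.
Proof.
move=> vx strict; have [[[_ nu1] _] _] := vx.
have : on_face (a, active_set a nu) nu.
  by split=> // [w|a']; rewrite inE; [move/eqP | case/and3P=> _ _ /eqP].
move=> /(xgetI mu0) [s1 supp flat]; apply: region_J_vertex_eq vx strict s1 _ _.
  by move=> w nw0; apply: supp; rewrite inE nw0.
by move=> a' ne nm dnu0; apply: flat; rewrite inE ne nm dnu0 eqxx.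
Qed.

Definition strict_face (al : R) (i : face) : Prop :=
  [/\ relevant al i.1, region_alpha i.1 al (face_point i)
    & forall a', a' != i.1 -> movable i.1 a' -> b i.1 a' al < du i.1 a' (face_point i)].

Definition face_value (i : face) : R := \sum_w face_point i w * uS i.1 w.

(** * Strictly incentive-compatible schemes *)

Definition strictly_feasible (al : R) (tau : scheme R Omega A) : Prop :=
  is_scheme mu0 tau /\ forall t, List.In t tau -> belief (atom_nu t) /\
    forall a', a' != atom_a t -> b (atom_a t) a' al < du (atom_a t) a' (atom_nu t).

Lemma near0_strictly_feasible_interval_safe (al : R) tau :
  0 < al -> strictly_feasible al tau ->
  \forall e \near 0^'+, forall lo hi, lo <= al -> al <= hi -> hi - lo <= e ->
    interval_safe_feasible mu0 uR lo hi tau.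
Proof.
move=> al0 [sch Htau].
have /near_all_In near_tau : forall t, List.In t tau -> \forall e \near 0^'+, forall a' lo hi,
    lo <= al -> al <= hi -> hi - lo <= e ->
    a' != atom_a t -> bJ (atom_a t) a' lo hi < du (atom_a t) a' (atom_nu t).
  move=> t /Htau [_ strict]; apply: filter_forall => a'.
  have [->|ne] := eqVneq a' (atom_a t).
    by apply: filterS (nbhs_right_gt 0) => e _ lo hi _ _ _.
  by apply: filterS (near0_b_J_lt al0 (strict a' ne)) => e He lo hi la ah w _; apply: He.
apply: filterS near_tau => e He lo hi la ah w; split=> // t ht.
have int : intIC_J (atom_a t) lo hi (atom_nu t).
  by split=> [|a' ne]; [case: (Htau t ht) | apply: He].
split; last by exists (atom_nu t).
by case: int => bnu H; split=> // a' /H /ltW.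
Qed.

Definition mix (ep : R) (nu y : Omega -> R) (w : Omega) : R := (1 - ep) * nu w + ep * y w.

Definition extrapolate (s : R) (m : Omega -> R) (w : Omega) : R := (1 + s) * mu0 w + (- s) * m w.

(* Every posterior moves a fraction [ep] towards the strictly IC point [y a]; as
   [lam * ep = (1 - lam) * s], one extra atom at [extrapolate s] restores Bayes plausibility. *)
Definition perturb (sg : scheme R Omega A) (y : A -> Omega -> R) (a0 : A) (s ep : R)
  : scheme R Omega A :=
  let lam := s / (s + ep) in
  [seq Atom (lam * atom_p t) (mix ep (atom_nu t) (y (atom_a t))) (atom_a t) | t <- sg]
  ++ [:: Atom (1 - lam)
           (extrapolate s (fun w => \sum_(t <- sg) atom_p t * y (atom_a t) w)) a0].

Lemma mix_strict a (al ep : R) nu y : 0 < ep <= 1 -> region_alpha a al nu -> belief y ->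
  (forall a', a' != a -> b a a' al < du a a' y) ->
  belief (mix ep nu y) /\ forall a', a' != a -> b a a' al < du a a' (mix ep nu y).
Proof.
move=> /andP[ep0 ep1] [[nu0 nu1] reg] [y0 y1] strict; split; first split.
- by move=> w; rewrite /mix addr_ge0 ?mulr_ge0 // ?subr_ge0 // ltW.
- by rewrite sum_comb nu1 y1; ring.
move=> a' ne; rewrite du_comb.
have h1 : (1 - ep) * b a a' al <= (1 - ep) * du a a' nu by rewrite ler_wpM2l ?subr_ge0 ?reg.
have h2 : ep * b a a' al < ep * du a a' y by rewrite ltr_pM2l ?strict.
lra.
Qed.

Lemma near0_extrapolate_strict (al : R) (a0 : A) m : full_support_prior mu0 ->
  (forall a', a' != a0 -> b a0 a' al < du a0 a' mu0) -> \sum_w m w = 1 ->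
  \forall s \near 0^'+, belief (extrapolate s m) /\
    forall a', a' != a0 -> b a0 a' al < du a0 a' (extrapolate s m).
Proof.
move=> [mu0_gt0 mu01] dflt m1.
have /filter_forall coord := fun w => near0_addr_mul_gt0 (mu0 w - m w) (mu0_gt0 w).
have /filter_forall constr : forall a', \forall s \near 0^'+, forall k, `|k| <= s ->
    a' != a0 -> 0 < du a0 a' mu0 - b a0 a' al + k * (du a0 a' mu0 - du a0 a' m).
  move=> a'; have [->|ne] := eqVneq a' a0.
    by apply: filterS (nbhs_right_gt 0) => s _ k _.
  have slack : 0 < du a0 a' mu0 - b a0 a' al by rewrite subr_gt0 dflt.
  by apply: filterS (near0_addr_mul_gt0 (du a0 a' mu0 - du a0 a' m) slack) => s Hs k /Hs.
apply: filterS (filterI (nbhs_right_gt 0) (filterI coord constr)) => s [s0 [Hc Hk]].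
have ss : `|s| <= s by rewrite gtr0_norm.
split; first split.
- by move=> w; have := Hc w s ss; rewrite /extrapolate; lra.
- by rewrite /extrapolate sum_comb mu01 m1; ring.
- by move=> a' ne; rewrite /extrapolate du_comb; have := Hk a' s ss ne; lra.
Qed.

Lemma perturb_is_scheme sg y a0 (s ep : R) : is_scheme mu0 sg -> 0 < s -> 0 < ep ->
  is_scheme mu0 (perturb sg y a0 s ep).
Proof.
move=> [p0 [p1 bayes]] s0 ep0; rewrite /perturb; set lam := s / (s + ep).
have sep0 : 0 < s + ep by rewrite addr_gt0.
have lam0 : 0 <= lam by rewrite divr_ge0 // ltW.
have lam1 : lam <= 1 by rewrite ler_pdivrMr // mul1r lerDl ltW.
split; [|split].
- move=> t /List.in_app_iff [/List.in_map_iff [t0 [<- /p0 ?]] | [<- | []]] /=.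
    exact: mulr_ge0.
  by rewrite subr_ge0.
- by rewrite big_cat big_map /= big_cons big_nil -mulr_sumr p1 /=; ring.
move=> w; rewrite big_cat big_map /= big_cons big_nil /= /mix /extrapolate.
have -> : \sum_(t <- sg) lam * atom_p t * ((1 - ep) * atom_nu t w + ep * y (atom_a t) w) =
    lam * (1 - ep) * \sum_(t <- sg) atom_p t * atom_nu t w
    + lam * ep * \sum_(t <- sg) atom_p t * y (atom_a t) w.
  by rewrite !mulr_sumr -big_split /=; apply: eq_bigr => t _; ring.
by rewrite bayes /lam; field; rewrite gt_eqF.
Qed.

Lemma perturb_value_ge sg y a0 (s ep : R) : is_scheme mu0 sg ->
  (forall t, List.In t sg -> belief (atom_nu t) /\ belief (y (atom_a t))) ->
  belief (extrapolate s (fun w => \sum_(t <- sg) atom_p t * y (atom_a t) w)) ->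
  0 < s -> 0 < ep ->
  value uS sg - 2 * uS_bound * (ep / s + ep) <= value uS (perturb sg y a0 s ep).
Proof.
move=> [p0 [p1 _]] bel zb s0 ep0; rewrite /perturb; set lam := s / (s + ep).
set z := extrapolate _ _ in zb *.
set V := value uS sg.
set Y := \sum_(t <- sg) atom_p t * \sum_w y (atom_a t) w * uS (atom_a t) w.
set Z := \sum_w z w * uS a0 w.
have -> : value uS ([seq Atom (lam * atom_p t) (mix ep (atom_nu t) (y (atom_a t))) (atom_a t)
    | t <- sg] ++ [:: Atom (1 - lam) z a0]) = lam * ((1 - ep) * V + ep * Y) + (1 - lam) * Z.
  rewrite /value big_cat big_map big_cons big_nil /= addr0; congr (_ + _).
  rewrite /V /Y /value !mulr_sumr -big_split /= mulr_sumr; apply: eq_bigr => t _.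
  have -> : \sum_w mix ep (atom_nu t) (y (atom_a t)) w * uS (atom_a t) w =
      (1 - ep) * \sum_w atom_nu t w * uS (atom_a t) w
      + ep * \sum_w y (atom_a t) w * uS (atom_a t) w.
    by rewrite !mulr_sumr -big_split /=; apply: eq_bigr => w _; rewrite /mix; ring.
  ring.
have /ler_normlP[_ bV] : `|V| <= uS_bound.
  exact: mixture_value_bound p0 p1 (fun t ht => (bel t ht).1).
have /ler_normlP[bY _] : `|Y| <= uS_bound.
  exact: (mixture_value_bound (f := fun t => y (atom_a t))) p0 p1 (fun t ht => (bel t ht).2).
have /ler_normlP[bZ _] : `|Z| <= uS_bound by exact: posterior_value_bound.
have B0 := uS_bound_ge0.
have sep0 : 0 < s + ep by rewrite addr_gt0.
have lam0 : 0 <= lam by rewrite divr_ge0 // ltW.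
have lam1 : lam <= 1 by rewrite ler_pdivrMr // mul1r lerDl ltW.
have lam_ep : 1 - lam <= ep / s.
  have -> : 1 - lam = ep / (s + ep) by rewrite /lam; field; rewrite gt_eqF.
  by rewrite ler_pM2l // lef_pV2 ?posrE // lerDl ltW.
have lep0 : 0 <= lam * ep by rewrite mulr_ge0 // ltW.
have h1 : 0 <= (1 - lam) * (Z + uS_bound) by apply: mulr_ge0; lra.
have h2 : 0 <= (1 - lam) * (uS_bound - V) by apply: mulr_ge0; lra.
have h3 : 0 <= lam * ep * (Y + uS_bound) by apply: mulr_ge0; lra.
have h4 : 0 <= lam * ep * (uS_bound - V) by apply: mulr_ge0; lra.
have h5 : 0 <= uS_bound * (ep / s - (1 - lam)) by apply: mulr_ge0; lra.
have h6 : 0 <= uS_bound * (ep * (1 - lam)) by rewrite !mulr_ge0 // ?subr_ge0 // ltW.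
lra.
Qed.

Lemma strictify (al : R) (a0 : A) sg (eta : R) : 0 < al -> full_support_prior mu0 ->
  (forall a', a' != a0 -> b a0 a' al < du a0 a' mu0) ->
  true_bias_feasible mu0 uR al sg -> 0 < eta ->
  exists2 tau, strictly_feasible al tau & value uS sg - eta <= value uS tau.
Proof.
move=> al0 prior dflt [sch Hsg] eta0.
have /choice [y Hy] : forall a, exists nu, relevant al a ->
    belief nu /\ forall a', a' != a -> b a a' al < du a a' nu.
  move=> a; have [/(relevantP _ al0) [nu Hnu]|nrel] := pselect (relevant al a); first by exists nu.
  by exists mu0.
pose ms w := \sum_(t <- sg) atom_p t * y (atom_a t) w.
have ms1 : \sum_w ms w = 1.
  case: sch => _ [p1 _]; rewrite /ms exchange_big /= -p1; apply: eq_sum_In => t ht.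
  by rewrite -mulr_sumr; case: (Hy _ (Hsg t ht).1) => -[_ ->] _; rewrite mulr1.
have [s s0 [zb zstrict]] := near0_witness (near0_extrapolate_strict prior dflt ms1).
pose C := 2 * uS_bound * (s^-1 + 1).
have [ep ep0 [ep1 epC]] : exists2 ep, 0 < ep & ep <= 1 /\ 0 < eta + ep * - C.
  apply: near0_witness; near=> ep; split.
    by apply/ltW; near: ep; apply: nbhs_right_lt; rewrite ltr01.
  have ep0 : 0 < ep by near: ep; exact: nbhs_right_gt.
  suff : forall k, `|k| <= ep -> 0 < eta + k * - C by apply; rewrite gtr0_norm.
  by near: ep; exact: near0_addr_mul_gt0.
exists (perturb sg y a0 s ep).
  split=> [|t]; first exact: perturb_is_scheme.
  move=> /List.in_app_iff [/List.in_map_iff [t0 [<- ht0]] | [<- | []]] //=.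
  have [rel reg] := Hsg t0 ht0; have [ybel ystrict] := Hy _ rel.
  by apply: mix_strict; rewrite ?ep0.
apply: le_trans (perturb_value_ge _ _ _ _ s0 ep0) => //.
  by rewrite /C in epC; rewrite lerD2l lerN2; lra.
by move=> t ht; have [rel [bel _]] := Hsg t ht; split=> //; case: (Hy _ rel).
Unshelve. all: by end_near.
Qed.

Lemma near0_interval_safe_approx (al : R) (a0 : A) sg (eta : R) :
  0 < al -> full_support_prior mu0 ->
  (forall a', a' != a0 -> b a0 a' al < du a0 a' mu0) ->
  true_bias_feasible mu0 uR al sg -> 0 < eta ->
  \forall e \near 0^'+, forall lo hi, lo <= al -> al <= hi -> hi - lo <= e ->
    exists2 sg', interval_safe_feasible mu0 uR lo hi sg' & value uS sg - eta <= value uS sg'.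
Proof.
move=> al0 prior dflt feas eta0.
have [tau st tau_ge] := strictify al0 prior dflt feas eta0.
apply: filterS (near0_strictly_feasible_interval_safe al0 st) => e He lo hi la ah w.
by exists tau => //; apply: He.
Qed.

End Persuasion.

Section Dichotomy.
Context {R : realType} {Omega A : finType} (mu0 : Omega -> R) (uS uR : A -> Omega -> R).
Variables (al : R) (a0 : A).
Hypotheses (prior : full_support_prior mu0) (al_gt0 : 0 < al)
  (default : forall a, a != a0 -> EuR uR a mu0 < EuR uR a0 mu0).
Local Open Scope classical_set_scope.

Local Notation du := (du uR).
Local Notation b := (b_alpha mu0 uR).
Local Notation bJ := (b_J mu0 uR).
Local Notation movable := (movable mu0 uR).
Local Notation feasible := (true_bias_feasible mu0 uR al).
Local Notation face := (@face Omega A).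
Local Notation face_point := (face_point mu0 uR).
Local Notation face_value := (face_value mu0 uS uR).
Local Notation strict_face := (strict_face mu0 uR al).

Lemma default_strict a' : a' != a0 -> b a0 a' al < du a0 a' mu0.
Proof.
move=> ne; have := default ne; rewrite -subr_gt0 EuR_subr => d0.
by rewrite b_alphaE ?lt0r_neq0 // ltrBlDr ltrDl divr_gt0.
Qed.

Lemma no_info_feasible : feasible [:: Atom 1 mu0 a0].
Proof.
have [mu0_gt0 mu01] := prior; have bmu0 : belief mu0 by split=> // w; apply: ltW.
split.
  split=> [t [<-|[]] //|]; rewrite !big_seq1 /= ?mul1r //; split=> // w.
  by rewrite big_seq1 mul1r.
move=> t [<-|[]] /=; split.
  by apply/relevantP => //; exists mu0; split=> // a' /default_strict.
by split=> // a' /default_strict /ltW.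
Qed.

Definition opt_value : R := sup [set value uS sg | sg in feasible].

Lemma opt_value_has_sup : has_sup [set value uS sg | sg in feasible].
Proof.
split; first by exists (value uS [:: Atom 1 mu0 a0]), [:: Atom 1 mu0 a0]; first exact: no_info_feasible.
exists (uS_bound uS) => _ [sg [sch Hsg] <-].
case: (sch) => p0 [p1 _]; have := mixture_value_bound uS p0 p1 (fun t ht => ((Hsg t ht).2).1).
by rewrite ler_norml => /andP[].
Qed.

Lemma value_le_opt sg : feasible sg -> value uS sg <= opt_value.
Proof. by move=> feas; apply: sup_upper_bound; [exact: opt_value_has_sup | exists sg]. Qed.

Lemma near0_optimizer_value_ge (eta : R) : 0 < eta ->
  \forall e \near 0^'+, forall lo hi, 0 < lo -> lo <= al -> al <= hi -> hi - lo <= e ->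
    forall tau, interval_safe_vertex_optimizer mu0 uS uR lo hi tau ->
      opt_value - eta <= value uS tau.
Proof.
move=> eta0; have eta2 : 0 < eta / 2 by rewrite divr_gt0.
have [_ [sg feas <-] sg_ge] := sup_adherent eta2 opt_value_has_sup.
have := near0_interval_safe_approx uS al_gt0 prior default_strict feas eta2.
apply: filterS => e He lo hi lo0 la ah w tau [_ [_ opt]].
have [sg' safe sg'_ge] := He lo hi la ah w; have := opt sg' safe.
rewrite -/opt_value in sg_ge; lra.
Qed.

Local Notation n := #|{: face}|.

Definition weight (m : 'rV[R]_n) (i : face) : R := m ord0 (enum_rank i).

Definition face_box (m : 'rV[R]_n) : Prop :=
  forall i, (strict_face i -> 0 <= weight m i <= 1) /\ (~ strict_face i -> weight m i = 0).

Lemma face_boxE m : face_box m <-> unit_box (fun j => strict_face (enum_val j)) m.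
Proof.
split=> box j; first by have := box (enum_val j); rewrite /weight enum_valK.
by have := box (enum_rank j); rewrite enum_rankK.
Qed.

Definition face_gap (m : 'rV[R]_n) : R :=
  \sum_w `|\sum_i weight m i * face_point i w - mu0 w|
  + `|opt_value - \sum_i weight m i * face_value i|.

Lemma face_gap_ge0 m : 0 <= face_gap m.
Proof. by rewrite addr_ge0 ?sumr_ge0. Qed.

Lemma face_gap_continuous : continuous face_gap.
Proof.
have L x : continuous (fun m : 'rV[R]_n => \sum_i weight m i * x i).
  exact: weighted_sum_continuous.
apply: continuous_addr.
  apply: continuous_sumr => w; apply: continuous_normr.
  by apply: continuous_subr => //; exact: cst_continuous.
by apply: continuous_normr; apply: continuous_subr => //; exact: cst_continuous.
Qed.

Lemma face_gap_min : exists2 m0, face_box m0 & forall m, face_box m -> face_gap m0 <= face_gap m.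
Proof.
have [m0 box0 min0] :=
  continuous_min_unit_box (fun j => strict_face (enum_val j)) face_gap_continuous.
by exists m0 => [|m /face_boxE]; [apply/face_boxE | apply: min0].
Qed.

Definition face_scheme (m : 'rV[R]_n) : scheme R Omega A :=
  [seq Atom (weight m i) (face_point i) i.1 | i <- index_enum face & `[< strict_face i >]].

Lemma sum_face_scheme m (F : atom R Omega A -> R) : face_box m ->
  \sum_(t <- face_scheme m) atom_p t * F t
  = \sum_i weight m i * F (Atom (weight m i) (face_point i) i.1).
Proof.
move=> box; rewrite big_map big_filter big_mkcond /=; apply: eq_bigr => i _.
by case: asboolP => // /(box i).2 ->; rewrite !mul0r.
Qed.

Lemma face_scheme_feasible m : face_box m ->
  (forall w, \sum_i weight m i * face_point i w = mu0 w) -> feasible (face_scheme m).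
Proof.
move=> box bayes; have atoms t : List.In t (face_scheme m) ->
    exists2 i, strict_face i & t = Atom (weight m i) (face_point i) i.1.
  by move=> ht; have [i /asboolP si ->] := In_map_filter ht; exists i.
have mass : \sum_i weight m i = 1.
  have [_ mu01] := prior; rewrite -mu01 (eq_bigr _ (fun w _ => esym (bayes w))) exchange_big /=.
  apply: eq_bigr => i _; rewrite -mulr_sumr.
  have [[_ [[_ ->] _] _]|ns] := pselect (strict_face i); first by rewrite mulr1.
  by rewrite ((box i).2 ns) mul0r.
split; [split; [|split]|].
- by move=> t /atoms [i /(box i).1 /andP[]// + _ ->].
- rewrite -mass; under eq_bigr do rewrite -[atom_p _]mulr1.
  by rewrite (sum_face_scheme (fun=> 1)) //; under eq_bigr do rewrite mulr1.
- by move=> w; rewrite -bayes (sum_face_scheme (fun t => atom_nu t w)).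
by move=> t /atoms [i [rel reg _] ->].
Qed.

Lemma P_info_alpha_face_scheme m : P_info_alpha mu0 uR al (face_scheme m) = 0.
Proof.
apply: big_pred0_In => t ht; have [i /asboolP [_ _ strict] ->] := In_map_filter ht.
apply/existsP => -[a' /andP[mov /eqP tight]].
have [eq_a|ne] := eqVneq a' i.1; first by move: mov; rewrite eq_a /Defs.movable du_self eqxx.
by have := strict a' ne mov; rewrite tight ltxx.
Qed.

Lemma face_gap0_optimal m : face_box m -> face_gap m = 0 ->
  exists tau, true_bias_optimal mu0 uS uR al tau /\ P_info_alpha mu0 uR al tau = 0.
Proof.
move=> box /eqP; rewrite paddr_eq0 ?sumr_ge0 // => /andP[/eqP dist0 /eqP val0].
have bayes w : \sum_i weight m i * face_point i w = mu0 w.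
  have /eqP := @psumr_eq0P _ _ _ _ (fun w _ => normr_ge0 _) dist0 w isT.
  by rewrite normr_eq0 subr_eq0 => /eqP.
exists (face_scheme m); split; last exact: P_info_alpha_face_scheme.
split=> [|sg /value_le_opt]; first exact: face_scheme_feasible.
move: val0 => /eqP; rewrite normr_eq0 subr_eq0 => /eqP ->.
by rewrite /value (sum_face_scheme (fun t => \sum_w atom_nu t w * uS (atom_a t) w)).
Qed.

Section NonInformativePart.
Variables (lo hi : R) (tau : scheme R Omega A).
Hypotheses (lo_gt0 : 0 < lo) (lo_le : lo <= al) (hi_ge : al <= hi)
  (tau_opt : interval_safe_vertex_optimizer mu0 uS uR lo hi tau).

Definition informative (t : atom R Omega A) : bool :=
  [exists a', movable (atom_a t) a' && (du (atom_a t) a' (atom_nu t) == bJ (atom_a t) a' lo hi)].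

Definition face_of (t : atom R Omega A) : face := (atom_a t, active_set mu0 uR (atom_a t) (atom_nu t)).

Lemma noninformative_slack t : List.In t tau -> ~~ informative t ->
  forall a', a' != atom_a t -> movable (atom_a t) a' ->
    bJ (atom_a t) a' lo hi < du (atom_a t) a' (atom_nu t).
Proof.
move=> ht ni a' ne mov; have [[_ /(_ t ht) [[_ reg] _]] _] := tau_opt.
rewrite lt_def reg ?ne // andbT; apply: contraNneq ni => tight.
by apply/existsP; exists a'; rewrite mov tight eqxx.
Qed.

Lemma noninformative_face_point t : List.In t tau -> ~~ informative t ->
  face_point (face_of t) = atom_nu t.
Proof.
move=> ht ni; have [_ [/(_ t ht) vx _]] := tau_opt.
exact: face_point_vertex vx (noninformative_slack ht ni).
Qed.

Lemma noninformative_strict_face t : List.In t tau -> ~~ informative t ->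
  strict_face (face_of t).
Proof.
move=> ht ni; have [[_ /(_ t ht) [reg [nu int]]] _] := tau_opt.
rewrite /strict_face /= noninformative_face_point //; split.
- exact: intIC_J_relevant lo_gt0 lo_le hi_ge int.
- exact: region_J_region_alpha lo_gt0 lo_le hi_ge reg.
move=> a' ne mov; apply: le_lt_trans (noninformative_slack ht ni ne mov).
exact: b_alpha_le_b_J.
Qed.

Definition noninformative_weights : 'rV[R]_n :=
  \row_j \sum_(t <- tau | ~~ informative t && (face_of t == enum_val j)) atom_p t.

Lemma weight_noninformative i : weight noninformative_weights i =
  \sum_(t <- tau | ~~ informative t && (face_of t == i)) atom_p t.
Proof. by rewrite /weight mxE enum_rankK. Qed.

Lemma noninformative_weights_box : face_box noninformative_weights.
Proof.
have [[[p0 [p1 _]] _] _] := tau_opt.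
move=> i; rewrite weight_noninformative; split=> [_|ns].
  by rewrite sumr_ge0_In //= -p1 ler_sum_filter_In.
apply: big_pred0_In => t ht; apply: contra_notN ns => /andP[ni /eqP <-].
exact: noninformative_strict_face.
Qed.

Lemma sum_noninformative_weights (X : face -> R) (Y : atom R Omega A -> R) :
  (forall t, List.In t tau -> ~~ informative t -> X (face_of t) = Y t) ->
  \sum_i weight noninformative_weights i * X i
  = \sum_(t <- tau | ~~ informative t) atom_p t * Y t.
Proof.
move=> XY; under eq_bigr do rewrite weight_noninformative.
rewrite sum_fibers big_mkcond [RHS]big_mkcond; apply: eq_sum_In => t ht.
by case: ifP => // ni; rewrite XY ?ni.
Qed.

Lemma face_gap_le_info : face_gap noninformative_weights
  <= (1 + uS_bound uS) * P_info_J mu0 uR lo hi tau + (opt_value - value uS tau).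
Proof.
have [[[p0 [p1 bayes]] reg] _] := tau_opt.
have bel t : List.In t tau -> belief (atom_nu t) by move=> /reg [[]].
set P := P_info_J mu0 uR lo hi tau.
set I := \sum_(t <- tau | informative t) atom_p t * \sum_w atom_nu t w * uS (atom_a t) w.
have dist : \sum_w `|\sum_i weight noninformative_weights i * face_point i w - mu0 w| = P.
  transitivity (\sum_w \sum_(t <- tau | informative t) atom_p t * atom_nu t w).
    apply: eq_bigr => w _.
    rewrite (@sum_noninformative_weights (face_point^~ w) (fun t => atom_nu t w)); last first.
      by move=> t ht ni; rewrite noninformative_face_point.
    rewrite -(bayes w) [X in _ - X](bigID informative) /= opprD addrCA subrr addr0.
    rewrite normrN ger0_norm //.
    by apply: sumr_ge0_In => t ht; rewrite mulr_ge0 ?p0 //; case: (bel t ht).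
  rewrite exchange_big /= [LHS]big_mkcond [RHS]big_mkcond /=; apply: eq_sum_In => t ht.
  rewrite -/(informative t); case: ifP => // _.
  by rewrite -mulr_sumr; case: (bel t ht) => _ ->; rewrite mulr1.
have val : \sum_i weight noninformative_weights i * face_value i = value uS tau - I.
  rewrite (@sum_noninformative_weights face_value
    (fun t => \sum_w atom_nu t w * uS (atom_a t) w)); last first.
    by move=> t ht ni; rewrite /face_value noninformative_face_point.
  by rewrite /value [in RHS](bigID informative) /= [RHS]addrAC subrr add0r.
have I_le : `|I| <= P * uS_bound uS.
  apply: le_trans (ler_norm_sum _ _ _) _; rewrite mulr_suml big_mkcond [X in _ <= X]big_mkcond.
  apply: ler_sum_In => t ht; rewrite -/(informative t); case: ifP => // _.
  rewrite normrM ger0_norm ?p0 //.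
  by rewrite ler_wpM2l ?p0 //; exact: posterior_value_bound (bel t ht).
have opt_ge : value uS tau <= opt_value.
  exact/value_le_opt/(interval_safe_true_bias_feasible lo_gt0 lo_le hi_ge tau_opt.1).
rewrite /face_gap dist val.
have : `|opt_value - (value uS tau - I)| <= opt_value - value uS tau + P * uS_bound uS.
  rewrite (_ : opt_value - (value uS tau - I) = opt_value - value uS tau + I); last by ring.
  by apply: le_trans (ler_normD _ _) _; rewrite ger0_norm ?subr_ge0 // lerD2l.
lra.
Qed.

End NonInformativePart.

End Dichotomy.


Theorem proposition4p4 (R : realType) (Omega A : finType)
  (mu0 : Omega -> R) (uS uR : A -> Omega -> R) (alpha_star : R) :
  full_support_prior mu0 ->
  unique_default mu0 uR ->
  0 < alpha_star <= 1 ->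
  (exists c eps : R, 0 < c /\ 0 < eps /\
     forall lo hi : R, 0 < lo -> lo <= alpha_star -> alpha_star <= hi ->
       hi <= 1 -> hi - lo <= eps ->
       forall tau : scheme R Omega A,
         interval_safe_vertex_optimizer mu0 uS uR lo hi tau ->
         c <= P_info_J mu0 uR lo hi tau)
  \/
  (exists tau : scheme R Omega A,
     true_bias_optimal mu0 uS uR alpha_star tau /\
     P_info_alpha mu0 uR alpha_star tau = 0).
Proof.
move=> prior [a0 default] /andP[al0 _].
have [m0 box0 min0] := face_gap_min mu0 uS uR alpha_star.
have [gap0|gap_ne0] := eqVneq (face_gap mu0 uS uR alpha_star m0) 0.
  by right; apply: (face_gap0_optimal prior al0 default box0).
left; set g := face_gap mu0 uS uR alpha_star m0 in gap_ne0 min0.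
have g_gt0 : 0 < g by rewrite lt_def gap_ne0 face_gap_ge0.
have B0 := uS_bound_ge0 uS.
have g2_gt0 : 0 < g / 2 by rewrite divr_gt0.
have [eps eps0 Heps] := near0_witness (near0_optimizer_value_ge uS prior al0 default g2_gt0).
exists (g / (2 * (1 + uS_bound uS))), eps; split; [|split=> //].
  by rewrite divr_gt0 // mulr_gt0 //; lra.
move=> lo hi lo0 la ah _ w tau opt.
have := min0 _ (noninformative_weights_box lo0 la ah opt).
have := face_gap_le_info prior al0 default lo0 la ah opt.
have := Heps lo hi lo0 la ah w tau opt.
rewrite ler_pdivrMr ?mulr_gt0 //; lra.
Qed.
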